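(* Let $G$ be a finite group with $|G| = mp^k$, where $p$ is a prime, $k \geq 1$, and $m$ is a natural number such that $m/q < p < m$, where $q$ is the smallest prime divisor of $m$. Then a Sylow $p$-subgroup of $G$ is either normal in $G$ or self-normalizing in $G$. *)

From mathcomp Require Import all_boot all_fingroup all_solvable.
Set Implicit Arguments. Unset Strict Implicit. Unset Printing Implicit Defensive.

(** The number [n = |G : N_G(P)|] of Sylow [p]-subgroups divides [m = |G : P|]
    and is [1] modulo [p]. If [n > 1] then [n > p]; were [P] a proper subgroup
    of [N_G(P)], the cofactor [d = |N_G(P) : P| > 1] would give
    [n = m / d <= m / q < p]. The same bound shows
    [p] does not divide [m], so that [|G : P| = m]. *)

From mathcomp Require Import all_boot all_fingroup all_solvable.
Set Implicit Arguments. Unset Strict Implicit. Unset Printing Implicit Defensive.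
Local Open Scope group_scope.

Lemma leq_cofactor_divn_pdiv (d n : nat) :
  (1 < d)%N -> (n <= (d * n) %/ pdiv (d * n))%N.
Proof.
move=> d_gt1; have [-> | n_gt0] := posnP n; first by rewrite muln0.
rewrite -{1}(mulKn n (ltnW d_gt1)).
apply: leq_div2l; first by rewrite pdiv_gt0.
by apply: pdiv_min_dvd; rewrite ?dvdn_mulr.
Qed.

Lemma prime_not_dvdn_between (p m : nat) :
  (m %/ pdiv m < p)%N -> (p < m)%N -> ~~ (p %| m)%N.
Proof.
move=> lt_m_q_p lt_p_m; apply/negP => /dvdnP [t def_m].
have t_gt1 : (1 < t)%N.
  by move: lt_p_m; rewrite def_m; case: t {def_m} => [|[|t]]; rewrite ?mul1n ?ltnn.
have := leq_cofactor_divn_pdiv p t_gt1.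
by rewrite -def_m leqNgt lt_m_q_p.
Qed.

Lemma index_Syl (gT : finGroupType) (G P : {group gT}) (p m k : nat) :
  prime p -> #|G| = (m * p ^ k)%N -> ~~ (p %| m)%N ->
  p.-Sylow(G) P -> #|G : P| = m.
Proof.
move=> p_pr cardG p'm sylP.
have m_gt0 : (0 < m)%N by rewrite lt0n; apply: contraNneq p'm => ->.
have cardP : #|P| = (p ^ k)%N.
  rewrite (card_Hall sylP) p_part cardG lognM ?expn_gt0 ?(prime_gt0 p_pr) // pfactorK //.
  by rewrite logn_coprime ?prime_coprime.
apply/eqP; rewrite -(eqn_pmul2l (cardG_gt0 P)) (Lagrange (pHall_sub sylP)).
by rewrite cardG cardP mulnC.
Qed.

Lemma Syl_normal_or_self_normalizing (gT : finGroupType) (G P : {group gT}) p :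
  prime p -> p.-Sylow(G) P ->
  (forall d n, #|G : P| = (d * n)%N -> (1 < d)%N -> (n <= p)%N) ->
  P <| G \/ 'N_G(P) = P.
Proof.
move=> p_pr sylP cofactor_le_p.
have sPG := pHall_sub sylP.
have sPN : P \subset 'N_G(P) by rewrite subsetI sPG normG.
set n := #|G : 'N_G(P)|.
have n_mod_p : (n %% p = 1)%N by rewrite /n -(card_Syl sylP) card_Syl_mod.
have [n_le1 | n_gt1] := leqP n 1.
  left; rewrite /normal sPG /=.
  have : G \subset 'N_G(P) by rewrite -indexg_eq1 eqn_leq n_le1 indexg_gt0.
  by move/subset_trans; apply; apply: subsetIr.
have p_lt_n : (p < n)%N.
  case: ltngtP n_mod_p => // [/modn_small -> n1 | <-]; last by rewrite modnn.
  by rewrite n1 ltnn in n_gt1.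
right; apply/eqP; rewrite eq_sym eqEcard sPN /= -(Lagrange sPN).
rewrite -{2}(muln1 #|P|) leq_pmul2l //.
rewrite leqNgt; apply: contraTN p_lt_n => d_gt1; rewrite -leqNgt.
by apply: cofactor_le_p d_gt1; rewrite mulnC Lagrange_index // subsetIl.
Qed.

Theorem lemma1 (gT : finGroupType) (G : {group gT}) (p m k : nat)
  (hp : prime p) (hk : 0 < k) (hG : #|G| = (m * p ^ k)%N)
  (hlo : (m %/ pdiv m < p)%N) (hhi : (p < m)%N) :
  forall P : {group gT}, P \in 'Syl_p(G) -> P <| G \/ 'N_G(P) = P.
Proof.
move=> P; rewrite inE => sylP.
apply: (Syl_normal_or_self_normalizing hp sylP) => d n.
rewrite (index_Syl hp hG (prime_not_dvdn_between hlo hhi) sylP) => def_m d_gt1.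
apply: ltnW; apply: leq_ltn_trans hlo.
by rewrite def_m leq_cofactor_divn_pdiv.
Qed.
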